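(* For all integers $n\ge1$ and $m\ge0$, $\operatorname{diam}(Y_{n,m})=\operatorname{ecc}_{Z_{n,m}}(0)$, where $0$ is the all-zero vertex of $Z_{n,m}$.
   Context: For integers $n\ge1$, $m\ge0$, the Yoke graph $Y_{n,m}$ is the simple graph whose vertices are the tuples $v=(v_0,\dots,v_{m+1})$ with $v_0,v_{m+1}\in\mathbb{Z}_n$, $v_1,\dots,v_m\in\{0,1\}$ and $\sum_{i=0}^{m+1}v_i\equiv0\pmod n$. The dYoke graph $Z_{n,m}$ is defined identically except that $v_1,\dots,v_m\in\{-1,0,1\}$. In both graphs, two vertices $u,v$ are adjacent iff there is $0\le i\le m$ with $u_j=v_j$ for all $j\notin\{i,i+1\}$ and either ($u_i=v_i+1$, $u_{i+1}=v_{i+1}-1$) or ($u_i=v_i-1$, $u_{i+1}=v_{i+1}+1$), with the bucket entries (indices $0$ and $m+1$) computed modulo $n$. $\operatorname{ecc}_G(x)$ is the maximum distance from $x$ to a vertex of $G$. *)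

From mathcomp Require Import all_boot all_algebra.
Set Implicit Arguments. Unset Strict Implicit. Unset Printing Implicit Defensive.
Import GRing.Theory Num.Theory.

Section GraphDist.
Variables (T : finType) (e : rel T).

Fixpoint ball (k : nat) (x : T) : {set T} :=
  match k with
  | 0 => [set x]
  | k'.+1 => ball k' x :|: [set y | [exists z in ball k' x, e z y]]
  end.

(* graph distance; None encodes "infinite" (y unreachable from x).
   A shortest walk visits distinct vertices, so has length < #|T|. *)
Definition dist (x y : T) : option nat :=
  if [exists k : 'I_#|T|, y \in ball k x]
  then Some (find (fun k => y \in ball k x) (iota 0 #|T|))
  else None.

Definition ecc (x : T) : option nat :=
  if [forall y, dist x y != None]
  then Some (\max_(y : T) odflt 0 (dist x y)) else None.

Definition diam : option nat :=
  if [forall x, forall y, dist x y != None]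
  then Some (\max_(x : T) \max_(y : T) odflt 0 (dist x y)) else None.
End GraphDist.

(* A vertex is (v_0, (v_1..v_m), v_{m+1}) with buckets v_0, v_{m+1} in Z_n
   (represented by 'I_n) and interior entries in D, interpreted as integers via f. *)
Local Open Scope ring_scope.

Definition yk_cond (n m : nat) (D : finType) (f : D -> int)
  (v : 'I_n * m.-tuple D * 'I_n) : bool :=
  ((nat_of_ord v.1.1)%:Z + \sum_(d <- v.1.2) f d + (nat_of_ord v.2)%:Z == 0 %[mod n%:Z])%Z.

Definition yk_vtx (n m : nat) (D : finType) (f : D -> int) :=
  {v : 'I_n * m.-tuple D * 'I_n | yk_cond f v}.

Definition yk_entry (n m : nat) (D : finType) (f : D -> int)
  (v : yk_vtx n m f) (j : nat) : int :=
  let w := val v in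
  if j == 0%N then (nat_of_ord w.1.1)%:Z
  else if j == m.+1 then (nat_of_ord w.2)%:Z
  else nth 0 (map f w.1.2) j.-1.

Definition yk_eqat (n m j : nat) (a b : int) : bool :=
  if (j == 0%N) || (j == m.+1) then (a == b %[mod n%:Z])%Z else a == b.

Definition yk_adj (n m : nat) (D : finType) (f : D -> int) : rel (yk_vtx n m f) :=
  fun u v =>
    (u != v) &&
    [exists i : 'I_m.+1,
      [forall j : 'I_m.+2, ((nat_of_ord j != i) && (nat_of_ord j != i.+1)) ==>
          yk_eqat n m j (yk_entry u j) (yk_entry v j)]
      && ((yk_eqat n m i (yk_entry u i) (yk_entry v i + 1)
           && yk_eqat n m i.+1 (yk_entry u i.+1) (yk_entry v i.+1 - 1))
       || (yk_eqat n m i (yk_entry u i) (yk_entry v i - 1)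
           && yk_eqat n m i.+1 (yk_entry u i.+1) (yk_entry v i.+1 + 1)))].

Definition yoke_val (b : bool) : int := (nat_of_bool b)%:Z.
Definition Yoke_vtx (n m : nat) := yk_vtx n m yoke_val.
Definition Yoke_adj (n m : nat) : rel (Yoke_vtx n m) := @yk_adj n m _ yoke_val.

(* dYoke graph Z_{n,m}: interior entries in {-1,0,1}, d : 'I_3 encodes d - 1 *)
Definition dyoke_val (d : 'I_3) : int := (nat_of_ord d)%:Z - 1.
Definition dYoke_vtx (n m : nat) := yk_vtx n m dyoke_val.
Definition dYoke_adj (n m : nat) : rel (dYoke_vtx n m) := @yk_adj n m _ dyoke_val.

From mathcomp Require Import all_boot all_algebra zify ring.
Import GRing.Theory Num.Theory.
Set Implicit Arguments. Unset Strict Implicit. Unset Printing Implicit Defensive.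

(* Record a walk by its net flow g, where g i is the signed number of units
   moved from position i to i + 1: a walk of length k from x to y yields a
   flow from x to y of cost sum_i |g i| <= k.  In Y_{n,m}, whose interior
   entries are 0/1, every flow is conversely realised by a walk of length its
   cost: following the flow from any edge that carries it leads to an edge
   whose tail holds a unit and whose head is empty, and moving that unit
   lowers the cost by one.  The map v |-> v - u from Y_{n,m} to Z_{n,m} sends
   u to 0 and preserves flows, so d_Y(u, v) = d_Z(0, v - u); since every
   vertex of Z_{n,m} has the form v - u, diam Y_{n,m} = ecc_{Z_{n,m}}(0). *)

Section Balls.
Variables (T : finType) (e : rel T).

Lemma ball_refl k x : x \in ball e k x.
Proof. by elim: k => [|k IHk] /=; rewrite !inE ?IHk. Qed.

Lemma ballSP k x y :
  reflect (y \in ball e k x \/ exists2 z, z \in ball e k x & e z y)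
          (y \in ball e k.+1 x).
Proof.
rewrite /= !inE; apply: (iffP orP) => -[-> | hz]; [by left | | by left | right].
  by case/existsP: hz => z /andP[]; right; exists z.
by case: hz => z zx ezy; apply/existsP; exists z; rewrite zx.
Qed.

Lemma ball_step k x z y : z \in ball e k x -> e z y -> y \in ball e k.+1 x.
Proof. by move=> zx ezy; apply/ballSP; right; exists z. Qed.

Lemma ball_mono k k' x y : (k <= k')%N -> y \in ball e k x -> y \in ball e k' x.
Proof.
move=> /subnK <-; elim: (k' - k)%N => [|d IHd] // yx.
by apply/ballSP; left; apply: IHd.
Qed.

Lemma ball_add k l x y w :
  y \in ball e k x -> w \in ball e l y -> w \in ball e (k + l) x.
Proof.
move=> yx; elim: l w => [|l IHl] w; first by rewrite addn0 inE => /eqP ->.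
rewrite addnS => /ballSP[/IHl wx | [z /IHl zx ezw]]; last exact: ball_step zx ezw.
by apply/ballSP; left.
Qed.

Lemma ball_stationary k d x :
  ball e k.+1 x = ball e k x -> ball e (k + d) x = ball e k x.
Proof.
move=> fix_k; elim: d => [|d IHd]; first by rewrite addn0.
by rewrite addnS -[RHS]fix_k /= IHd.
Qed.

Lemma ball_grows_or_stops x j :
  (exists2 i, (i <= j)%N & ball e i.+1 x = ball e i x) \/ (j < #|ball e j x|)%N.
Proof.
elim: j => [|j [[i le_ij fix_i] | IHj]]; first by right; rewrite /= cards1.
  by left; exists i; first exact: leqW.
have [fix_j | grow_j] := eqVneq (ball e j.+1 x) (ball e j x); first by left; exists j.
right; apply: leq_ltn_trans IHj _; apply: proper_card.
rewrite properEneq eq_sym grow_j; apply/subsetP => y; exact: ball_mono.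
Qed.

Lemma ball_saturated k x y : y \in ball e k x -> y \in ball e #|T|.-1 x.
Proof.
have T_gt0 : (0 < #|T|)%N by apply/card_gt0P; exists x.
case: (ball_grows_or_stops x #|T|.-1) => [[i le_iT fix_i] | full] yx.
  apply: ball_mono le_iT _; rewrite -(ball_stationary k fix_i).
  by apply: ball_mono yx; exact: leq_addl.
suff /eqP -> : ball e #|T|.-1 x == setT by rewrite inE.
by rewrite eqEcard subsetT cardsT -(prednK T_gt0).
Qed.

Lemma distP k x y : y \in ball e k x ->
  exists2 d, dist e x y = Some d & forall k', (y \in ball e k' x) = (d <= k')%N.
Proof.
move=> /ball_saturated yx; have T_gt0 : (0 < #|T|)%N by apply/card_gt0P; exists x.
set P := fun k => y \in ball e k x.
have has_P : has P (iota 0 #|T|).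
  by apply/hasP; exists #|T|.-1; rewrite ?mem_iota ?add0n ?ltn_predL.
have lt_dT := has_P; rewrite has_find size_iota in lt_dT.
have Pd := nth_find 0 has_P; rewrite nth_iota // add0n in Pd.
have ex_k : [exists k : 'I_#|T|, P k] by apply/existsP; exists (Ordinal lt_dT).
exists (find P (iota 0 #|T|)); first by rewrite /dist ex_k.
move=> k'; apply/idP/idP => [Pk' | le_dk']; last exact: ball_mono le_dk' Pd.
rewrite leqNgt; apply/negP => lt_k'd.
have := before_find 0 lt_k'd; rewrite nth_iota ?add0n ?(ltn_trans lt_k'd) //.
by rewrite /P Pk'.
Qed.

End Balls.

Lemma ball_hom (T T' : finType) (e : rel T) (e' : rel T') (h : T -> T') :
  (forall a b, e a b -> h b \in ball e' 1 (h a)) ->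
  forall k x y, y \in ball e k x -> h y \in ball e' k (h x).
Proof.
move=> h1; elim=> [|k IHk] x y; first by rewrite !inE => /eqP ->.
case/ballSP => [/IHk hy | [z /IHk hz /h1 hy]]; first exact: ball_mono (leqnSn k) hy.
by rewrite -addn1; apply: ball_add hz hy.
Qed.

Lemma diam_eq_ecc (T T' : finType) (e : rel T) (e' : rel T') (z : T')
    (F : T -> T -> T') :
  (forall x y, exists k, y \in ball e k x) ->
  (forall x y k, (F x y \in ball e' k z) = (y \in ball e k x)) ->
  (forall w, exists x y, F x y = w) ->
  diam e = ecc e' z.
Proof.
move=> connected ballF surjF.
have dist_fin x y : exists d, dist e x y = Some d.
  by have [k /distP[d dxy _]] := connected x y; exists d.
have distF x y : dist e' z (F x y) = dist e x y.
  have [k xy] := connected x y; have [d -> ball_d] := distP xy.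
  rewrite -ballF in xy; have [d' -> ball_d'] := distP xy.
  have le_dd' : (d <= d')%N by rewrite -ball_d -ballF ball_d'.
  have le_d'd : (d' <= d)%N by rewrite -ball_d' ballF ball_d.
  by congr Some; apply/eqP; rewrite eqn_leq le_dd' le_d'd.
rewrite /diam /ecc.
have -> : [forall x, forall y, dist e x y != None].
  by apply/forallP => x; apply/forallP => y; have [d ->] := dist_fin x y.
have -> : [forall w, dist e' z w != None].
  apply/forallP => w; have [x [y <-]] := surjF w.
  by rewrite distF; have [d ->] := dist_fin x y.
congr Some; apply/eqP; rewrite eqn_leq; apply/andP; split.
  apply/bigmax_leqP => x _; apply/bigmax_leqP => y _.
  by rewrite -distF; exact: leq_bigmax.
apply/bigmax_leqP => w _; have [x [y <-]] := surjF w; rewrite distF.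
by apply: leq_trans (leq_bigmax x); apply: leq_bigmax y.
Qed.

Local Open Scope ring_scope.

Section Flows.
Variable m : nat.

(* [g i] is the net number of units moved from position [i] to [i + 1] (i <= m);
   [inflow g j] is the resulting change of the entry at position [j]. *)
Definition inflow (g : nat -> int) (j : nat) : int :=
  (if j is j'.+1 then g j' else 0) - (if (j <= m)%N then g j else 0).

Definition flow_cost (g : nat -> int) : nat := (\sum_(i < m.+1) `|g i|)%N.

Definition unit_flow (i : nat) (s : int) : nat -> int :=
  fun k => if k == i then s else 0.

Lemma inflow0 j : inflow \0 j = 0.
Proof. by rewrite /inflow /= if_same; case: j => [|j]; rewrite subrr. Qed.

Lemma inflowD g h j : inflow (g \+ h) j = inflow g j + inflow h j.
Proof. by rewrite /inflow; case: j => [|j] /=; [|case: (j < m)%N]; ring. Qed.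

Lemma inflowN g j : inflow (\- g) j = - inflow g j.
Proof. by rewrite /inflow; case: j => [|j] /=; [|case: (j < m)%N]; ring. Qed.

Lemma sum_inflow g : \sum_(j < m.+2) inflow g j = 0.
Proof.
rewrite /inflow sumrB big_ord_recl [X in _ - X]big_ord_recr /=.
rewrite ltnn addr0 add0r; apply/eqP; rewrite subr_eq0; apply/eqP/eq_bigr => i _.
by rewrite -ltnS ltn_ord.
Qed.

Lemma inflow_unit (i : nat) s j : (i <= m)%N ->
  inflow (unit_flow i s) j = (if j == i.+1 then s else 0) - (if j == i then s else 0).
Proof.
move=> le_im; rewrite /inflow /unit_flow; case: j => [|j] //=.
rewrite eqSS; case: ltnP => // le_mj.
by rewrite (_ : (j.+1 == i) = false) //; apply/eqP; lia.
Qed.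

Lemma flow_costD g h : (flow_cost (g \+ h) <= flow_cost g + flow_cost h)%N.
Proof. by rewrite /flow_cost -big_split /=; apply: leq_sum => i _; lia. Qed.

Lemma flow_cost_unit (i : 'I_m.+1) s : (s == 1) || (s == -1) ->
  flow_cost (unit_flow i s) = 1%N.
Proof.
move=> unit_s; rewrite /flow_cost (bigD1 i) //= big1 => [|k ne_ki].
  by rewrite /unit_flow eqxx addn0; case/orP: unit_s => /eqP ->.
by rewrite /unit_flow ifN.
Qed.

Lemma flow_cost_eq0 g : flow_cost g = 0%N -> forall k, (k <= m)%N -> g k = 0.
Proof.
move/eqP; rewrite sum_nat_eq0 => /forallP g0 k le_km.
by apply/eqP; rewrite -absz_eq0; exact: (g0 (Ordinal (le_km : (k < m.+1)%N))).
Qed.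

Lemma flow_cost_unit_lt (g : nat -> int) (i : 'I_m.+1) s :
  (s == 1) || (s == -1) -> 0 < s * g i ->
  (flow_cost (\- unit_flow i s \+ g) < flow_cost g)%N.
Proof.
move=> unit_s sg_pos; rewrite /flow_cost (bigD1 i) //= [X in (_ < X)%N](bigD1 i) //=.
have -> : (\sum_(k < m.+1 | k != i) `|(\- unit_flow i s \+ g) k|
          = \sum_(k < m.+1 | k != i) `|g k|)%N.
  by apply: eq_bigr => k ne_ki; rewrite /= /unit_flow ifN // oppr0 add0r.
rewrite ltn_add2r /= /unit_flow eqxx.
by case/orP: unit_s sg_pos => /eqP ->; lia.
Qed.

End Flows.

Section YokeLike.
Variables (n m : nat) (D : finType) (f : D -> int).
Local Notation V := (yk_vtx n m f).
Local Notation E := (@yk_entry n m D f).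
Local Notation eqat := (yk_eqat n m).
Local Notation adj := (@yk_adj n m D f).

Lemma eqat_refl j a : eqat j a a.
Proof. by rewrite /yk_eqat; case: ifP. Qed.

Lemma eqat_sym j a b : eqat j a b = eqat j b a.
Proof. by rewrite /yk_eqat; case: ifP => _; rewrite eq_sym. Qed.

Lemma eqat_trans j a b c : eqat j a b -> eqat j b c -> eqat j a c.
Proof. by rewrite /yk_eqat; case: ifP => _ /eqP -> /eqP ->. Qed.

Lemma eqat_add j a b c d : eqat j a b -> eqat j c d -> eqat j (a + c) (b + d).
Proof.
rewrite /yk_eqat; case: ifP => _ /eqP ab /eqP cd; apply/eqP; last by rewrite ab cd.
by rewrite -modzDm ab cd modzDm.
Qed.

Lemma eqat_opp j a b : eqat j a b -> eqat j (- a) (- b).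
Proof.
rewrite /yk_eqat; case: ifP => _ /eqP ab; apply/eqP; last by rewrite ab.
by rewrite -modzNm ab modzNm.
Qed.

Lemma eqat_congr j a a' b b' :
  eqat j a a' -> eqat j b b' -> eqat j a b = eqat j a' b'.
Proof.
move=> aa' bb'; have a'a : eqat j a' a by rewrite eqat_sym.
have b'b : eqat j b' b by rewrite eqat_sym.
apply/idP/idP => [ab | a'b']; first exact: eqat_trans (eqat_trans a'a ab) bb'.
exact: eqat_trans (eqat_trans aa' a'b') b'b.
Qed.

Lemma eqat_addr2 j a b c : eqat j (a + c) (b + c) = eqat j a b.
Proof.
by rewrite /yk_eqat; case: ifP => _; [exact: eqz_modDr | exact: (inj_eq (addIr c))].
Qed.

Lemma eqat_transpose j a b c : eqat j a (b + c) = eqat j b (a - c).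
Proof. by rewrite -(eqat_addr2 _ _ _ (- c)) addrK eqat_sym. Qed.

Lemma eqat_dvd j a b : eqat j a b -> (n %| a - b)%Z.
Proof. by rewrite /yk_eqat -eqz_mod_dvd; case: ifP => // _ /eqP ->. Qed.

Lemma dvdz_sum_eqat (a b : nat -> int) :
  (forall j, (j <= m.+1)%N -> eqat j (a j) (b j)) ->
  (n %| \sum_(j < m.+2) a j)%Z = (n %| \sum_(j < m.+2) b j)%Z.
Proof.
move=> ab; rewrite -[\sum_(j < _) a j](subrK (\sum_(j < m.+2) b j)) rpredDl //.
by rewrite -sumrB rpred_sum // => j _; apply/eqat_dvd/ab; rewrite -ltnS.
Qed.

Definition raw_entry (w : 'I_n * m.-tuple D * 'I_n) (j : nat) : int :=
  if j == 0%N then (nat_of_ord w.1.1)%:Z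
  else if j == m.+1 then (nat_of_ord w.2)%:Z
  else nth 0 (map f w.1.2) j.-1.

Lemma yk_condE w : yk_cond f w = (n %| \sum_(j < m.+2) raw_entry w j)%Z.
Proof.
rewrite /yk_cond big_ord_recl big_ord_recr /= -(big_map f xpredT id) (big_nth 0).
rewrite size_map size_tuple big_mkord mod0z.
have -> : \sum_(i < m) raw_entry w (bump 0 i) = \sum_(i < m) (map f w.1.2)`_i.
  by apply: eq_bigr => i _; rewrite /raw_entry /bump /= eqSS (ltn_eqF (ltn_ord i)).
by rewrite /raw_entry /bump /= eqxx addrA; apply: sameP eqP dvdz_mod0P.
Qed.

Lemma yk_entry_sum (x : V) : (n %| \sum_(j < m.+2) E x j)%Z.
Proof. by rewrite -yk_condE; case: x. Qed.

Lemma yk_entry_interior (x : V) j : (0 < j <= m)%N -> exists d, E x j = f d.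
Proof.
move=> j_int; have lt_jm : (j.-1 < m)%N by lia.
rewrite /yk_entry.
have [-> ->] : (j == 0%N) = false /\ (j == m.+1) = false by split; apply/eqP; lia.
set t := (val x).1.2; exists (nth (tnth t (Ordinal lt_jm)) t j.-1).
by apply: nth_map; rewrite size_tuple.
Qed.

Lemma yk_vtx_eq (f_inj : injective f) (x y : V) :
  (forall j, (j <= m.+1)%N -> eqat j (E x j) (E y j)) -> x = y.
Proof.
case: x y => [[[a t] b] xP] [[[a' t'] b'] yP] /= eqxy; apply: val_inj => /=.
have eq_ord (c c' : 'I_n) : (c%:Z == c'%:Z %[mod n])%Z -> c = c'.
  by rewrite !modz_small ?lez_nat ?ltz_nat ?ltn_ord // => /eqP [] /val_inj.
have := eqxy 0%N isT; have := eqxy m.+1 (leqnn _).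
rewrite /yk_eqat /yk_entry /= !eqxx ?orbT => /eq_ord <- /eq_ord <-.
congr (_, _, _); apply/val_inj/(inj_map f_inj)/(@eq_from_nth _ 0) => [|i].
  by rewrite !size_map !size_tuple.
rewrite size_map size_tuple => lt_im.
have := eqxy i.+1 (ltnW lt_im).
by rewrite /yk_eqat /yk_entry /= eqSS (ltn_eqF lt_im) => /eqP.
Qed.

Section Construction.
Hypothesis n_gt0 : (0 < n)%N.
Variable dec : int -> D.

Lemma absz_modz_lt a : (`|(a %% n)%Z| < n)%N.
Proof. lia. Qed.

Definition ord_mod (a : int) : 'I_n := Ordinal (absz_modz_lt a).

Lemma ord_modE a : (ord_mod a)%:Z = (a %% n)%Z.
Proof. rewrite /=; lia. Qed.

Definition raw_vertex_of (e : nat -> int) : 'I_n * m.-tuple D * 'I_n :=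
  (ord_mod (e 0%N), @Tuple m D _ (introT eqP (size_mkseq (fun i => dec (e i.+1)) m)),
   ord_mod (e m.+1)).

Variable e : nat -> int.
Hypothesis dec_e : forall j, (0 < j <= m)%N -> f (dec (e j)) = e j.

Lemma raw_vertex_ofE j : (j <= m.+1)%N -> eqat j (raw_entry (raw_vertex_of e) j) (e j).
Proof.
move=> le_jm; rewrite /raw_entry /yk_eqat.
have [-> | ne_j0] := eqVneq j 0%N; first by rewrite /= ord_modE modz_mod.
have [-> | ne_jm] := eqVneq j m.+1; first by rewrite /= ord_modE modz_mod.
have lt_jm : (j.-1 < m)%N by lia.
by rewrite /= (nth_map (dec 0)) ?size_mkseq // nth_mkseq // prednK ?lt0n // dec_e //; lia.
Qed.

Hypothesis sum_e : (n %| \sum_(j < m.+2) e j)%Z.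

Lemma raw_vertex_of_cond : yk_cond f (raw_vertex_of e).
Proof. by rewrite yk_condE (dvdz_sum_eqat raw_vertex_ofE). Qed.

Definition vertex_of : V := exist _ (raw_vertex_of e) raw_vertex_of_cond.

Lemma vertex_ofE j : (j <= m.+1)%N -> eqat j (E vertex_of j) (e j).
Proof. exact: raw_vertex_ofE. Qed.

End Construction.

Definition is_flow (x y : V) (g : nat -> int) : Prop :=
  forall j, (j <= m.+1)%N -> eqat j (E y j) (E x j + inflow m g j).

Lemma is_flow_refl x : is_flow x x \0.
Proof. by move=> j _; rewrite inflow0 addr0 eqat_refl. Qed.

Lemma is_flow_trans x y z g h : is_flow x y g -> is_flow y z h -> is_flow x z (g \+ h).
Proof.
move=> xy yz j le_jm; rewrite inflowD addrA.
exact: eqat_trans (yz j le_jm) (eqat_add (xy j le_jm) (eqat_refl _ _)).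
Qed.

Lemma is_flow_sym x y g : is_flow x y g -> is_flow y x (\- g).
Proof. by move=> xy j le_jm; rewrite inflowN eqat_transpose opprK; exact: xy. Qed.

Lemma is_flow_interior x y g j : is_flow x y g -> (0 < j <= m)%N ->
  E y j = E x j + (g j.-1 - g j).
Proof.
move=> xy j_int; have := xy j (leqW (proj2 (andP j_int))); rewrite /yk_eqat.
have [-> ->] : (j == 0%N) = false /\ (j == m.+1) = false by split; apply/eqP; lia.
by rewrite /= /inflow; case: j j_int => // j /andP[_ ->] /eqP.
Qed.

Lemma is_flow_cost0 (f_inj : injective f) x y g :
  flow_cost m g = 0%N -> is_flow x y g -> x = y.
Proof.
move=> /flow_cost_eq0 g0 xy; apply: (yk_vtx_eq f_inj) => j le_jm; rewrite eqat_sym.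
suff <- : E x j + inflow m g j = E x j by exact: xy.
rewrite /inflow; case: j le_jm => [|j] le_jm /=; first by rewrite g0 // subrr addr0.
by rewrite g0 //; case: ifP => [/g0 -> | _]; rewrite subrr addr0.
Qed.

Lemma is_flow_exists x y : exists g, is_flow x y g.
Proof.
pose g i := \sum_(j < i.+1) (E x j - E y j); exists g => -[|j] le_jm.
  suff -> : E x 0 + inflow m g 0 = E y 0 by apply: eqat_refl.
  by rewrite /inflow /g big_ord1 /=; ring.
have [lt_jm | le_mj] := ltnP j m.
  suff -> : E x j.+1 + inflow m g j.+1 = E y j.+1 by apply: eqat_refl.
  by rewrite /inflow lt_jm /g (big_ord_recr j.+1) /=; ring.
have -> : j = m by lia.
rewrite /yk_eqat eqxx orbT eqz_mod_dvd /inflow ltnn subr0 /g.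
have -> : E y m.+1 - (E x m.+1 + \sum_(j < m.+1) (E x j - E y j))
          = \sum_(j < m.+2) E y j - \sum_(j < m.+2) E x j.
  rewrite [\sum_(j < m.+2) E y j]big_ord_recr [\sum_(j < m.+2) E x j]big_ord_recr.
  by rewrite sumrB /=; ring.
by rewrite rpredB ?yk_entry_sum.
Qed.

Lemma unit_flowP u v (i : 'I_m.+1) s :
  reflect (is_flow u v (unit_flow i s))
    ([forall j : 'I_m.+2,
        ((nat_of_ord j != i) && (nat_of_ord j != i.+1)) ==> eqat j (E u j) (E v j)]
     && (eqat i (E u i) (E v i + s) && eqat i.+1 (E u i.+1) (E v i.+1 - s))).
Proof.
have le_im : (i <= m)%N by rewrite -ltnS.
have ne_i_iS : (nat_of_ord i == i.+1) = false by rewrite ltn_eqF.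
have ne_iS_i : (i.+1 == nat_of_ord i) = false by rewrite gtn_eqF.
apply: (iffP idP) => [/andP[/forallP others /andP[at_i at_iS]] j le_jm | flow].
  rewrite inflow_unit //.
  have [-> | ne_ji] := eqVneq j i; first by rewrite ne_i_iS sub0r eqat_transpose opprK.
  have [-> | ne_jiS] := eqVneq j i.+1; first by rewrite subr0 eqat_transpose.
  rewrite subrr addr0 eqat_sym.
  by have := others (Ordinal (le_jm : (j < m.+2)%N)); rewrite /= ne_ji ne_jiS.
apply/and3P; split.
- apply/forallP => j; apply/implyP => /andP[ne_ji ne_jiS].
  have := flow j (ltn_ord j); rewrite inflow_unit // (negbTE ne_ji) (negbTE ne_jiS).
  by rewrite subrr addr0 eqat_sym.
- have := flow i (leqW le_im).
  by rewrite inflow_unit // ne_i_iS eqxx sub0r eqat_transpose opprK.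
- by have := flow i.+1 le_im; rewrite inflow_unit // ne_iS_i eqxx subr0 eqat_transpose.
Qed.

Lemma yk_adj_unit_flow u v : adj u v ->
  exists i : 'I_m.+1, exists2 s, (s == 1) || (s == -1) & is_flow u v (unit_flow i s).
Proof.
case/andP=> _ /existsP[i /andP[others /orP[step | step]]]; exists i.
  by exists 1 => //; apply/unit_flowP; rewrite others.
by exists (-1) => //; apply/unit_flowP; rewrite others opprK.
Qed.

Lemma unit_flow_ball1 x y (i : 'I_m.+1) s : (s == 1) || (s == -1) ->
  is_flow x y (unit_flow i s) -> y \in ball adj 1 x.
Proof.
move=> unit_s xy; have [<- | ne_xy] := eqVneq x y; first exact: ball_refl.
apply: (ball_step (ball_refl _ 0 x)); rewrite /yk_adj ne_xy; apply/existsP; exists i.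
move/unit_flowP: xy => /andP[-> step] /=.
by case/orP: unit_s step => /eqP ->; rewrite ?opprK => ->; rewrite ?orbT.
Qed.

Lemma flow_of_ball k x y : y \in ball adj k x ->
  exists2 g, is_flow x y g & (flow_cost m g <= k)%N.
Proof.
elim: k y => [|k IHk] y.
  by rewrite inE => /eqP ->; exists \0; [exact: is_flow_refl | rewrite /flow_cost big1].
case/ballSP => [/IHk[g xy le_gk] | [z /IHk[g xz le_gk]]].
  by exists g; last exact: leqW.
case/yk_adj_unit_flow => i [s unit_s zy].
exists (g \+ unit_flow i s); first exact: is_flow_trans xz zy.
by apply: leq_trans (flow_costD _ _ _) _; rewrite flow_cost_unit // addn1.
Qed.

End YokeLike.

Lemma inflow_unitN m (i : nat) s j : (i <= m)%N ->
  inflow m (unit_flow i (- s)) j = - inflow m (unit_flow i s) j.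
Proof.
by move=> le_im; rewrite !inflow_unit //; case: (j == i.+1); case: (j == i); ring.
Qed.

Section ChipMove.
Variables (m : nat) (a b g : nat -> int).
Hypothesis ab01 : forall j, (0 < j <= m)%N -> (0 <= a j <= 1) && (0 <= b j <= 1).
Hypothesis flow_ab : forall j, (0 < j <= m)%N -> b j = a j + (g j.-1 - g j).

Lemma flow_run_end i : (i <= m)%N -> 0 < g i ->
  exists2 k, (k <= m)%N & 0 < g k /\ (k == m) || (a k.+1 == 0).
Proof.
have [d] := ubnP (m - i)%N; elim: d i => // d IHd i lt_d le_im g_pos.
have [eq_im | ne_im] := eqVneq i m.
  by exists i => //; split => //; apply/orP; left; apply/eqP.
have lt_im : (i < m)%N by rewrite ltn_neqAle ne_im.
have [gS_pos | gS_le0] := ltrP 0 (g i.+1); first by apply: IHd gS_pos; lia.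
exists i => //; split => //; apply/orP; right.
by have := @ab01 i.+1 lt_im; have := @flow_ab i.+1 lt_im => /=; lia.
Qed.

Lemma flow_run_start k : (k <= m)%N -> 0 < g k -> (k == m) || (a k.+1 == 0) ->
  exists2 i, (i <= m)%N &
    [/\ 0 < g i, (i == 0%N) || (a i == 1) & (i == m) || (a i.+1 == 0)].
Proof.
elim: k => [|k IHk] le_km g_pos right_end; first by exists 0%N.
have [a1 | a_ne1] := eqVneq (a k.+1) 1; first by exists k.+1; rewrite ?a1 ?eqxx ?orbT.
have := @ab01 k.+1 le_km; have := @flow_ab k.+1 le_km => /= flow_k ab01_k.
by apply: IHk; [exact: ltnW | lia | apply/orP; right; lia].
Qed.

Lemma chip_move_right i0 : (i0 <= m)%N -> 0 < g i0 ->
  exists2 i, (i <= m)%N &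
    0 < g i /\ forall j, (0 < j <= m)%N -> 0 <= a j + inflow m (unit_flow i 1) j <= 1.
Proof.
move=> le_i0m /(flow_run_end le_i0m)[k le_km [gk_pos right_end]].
have [i le_im [gi_pos left_end right_end']] := flow_run_start le_km gk_pos right_end.
exists i => //; split => // j j_int; rewrite inflow_unit //.
have /andP[a01 _] := ab01 j_int.
have [eq_j | _] := eqVneq j i.+1; first by subst j; rewrite gtn_eqF //=; lia.
have [eq_j | _] := eqVneq j i; first by subst j; lia.
by rewrite subrr addr0.
Qed.

End ChipMove.

Lemma chip_move (m : nat) (a b g : nat -> int) (s : int) (i0 : nat) :
  (s == 1) || (s == -1) ->
  (forall j, (0 < j <= m)%N -> (0 <= a j <= 1) && (0 <= b j <= 1)) ->
  (forall j, (0 < j <= m)%N -> b j = a j + (g j.-1 - g j)) ->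
  (i0 <= m)%N -> 0 < s * g i0 ->
  exists2 i, (i <= m)%N &
    0 < s * g i /\ forall j, (0 < j <= m)%N -> 0 <= a j + inflow m (unit_flow i s) j <= 1.
Proof.
case/orP=> /eqP-> ab01 flow_ab le_i0m.
  rewrite mul1r => /(chip_move_right ab01 flow_ab le_i0m)[i le_im [gi_pos moved]].
  by exists i; rewrite ?mul1r.
(* Exchanging units and holes turns a leftward move into a rightward one. *)
rewrite mulN1r => g_neg.
have ab01' j : (0 < j <= m)%N -> (0 <= 1 - a j <= 1) && (0 <= 1 - b j <= 1).
  by move/ab01; lia.
have flow_ab' j : (0 < j <= m)%N -> 1 - b j = 1 - a j + ((\- g) j.-1 - (\- g) j).
  by move/flow_ab => /= ->; ring.
have [i le_im [gi_neg moved]] := chip_move_right ab01' flow_ab' le_i0m g_neg.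
exists i; rewrite ?mulN1r //; split=> // j /moved.
by rewrite inflow_unitN //; set d := inflow _ _ _; lia.
Qed.

Lemma yoke_val_inj : injective yoke_val.
Proof. by case=> [] []. Qed.

Lemma dyoke_val_inj : injective dyoke_val.
Proof. by move=> c d; rewrite /dyoke_val => eq_cd; apply: ord_inj; lia. Qed.

Definition yoke_of_int (a : int) : bool := a == 1.

Lemma yoke_of_intK a : 0 <= a <= 1 -> yoke_val (yoke_of_int a) = a.
Proof. by rewrite /yoke_val /yoke_of_int; case: eqP => [-> | ]; lia. Qed.

Definition dyoke_of_int (a : int) : 'I_3 := inord `|a + 1|.

Lemma dyoke_of_intK a : -1 <= a <= 1 -> dyoke_val (dyoke_of_int a) = a.
Proof. by move=> a_range; rewrite /dyoke_val inordK; lia. Qed.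

Section Yoke.
Variables (n m : nat).
Hypothesis n_gt0 : (0 < n)%N.
Local Notation Yv := (Yoke_vtx n m).
Local Notation Zv := (dYoke_vtx n m).
Local Notation EY := (@yk_entry n m _ yoke_val).
Local Notation EZ := (@yk_entry n m _ dyoke_val).
Local Notation eqat := (yk_eqat n m).

Lemma yoke_entry_01 (u : Yv) j : (0 < j <= m)%N -> 0 <= EY u j <= 1.
Proof. by move/(yk_entry_interior u) => [[] ->]. Qed.

Lemma dyoke_entry_range (w : Zv) j : (0 < j <= m)%N -> -1 <= EZ w j <= 1.
Proof. by move/(yk_entry_interior w) => [[k lt_k3] ->]; rewrite /dyoke_val /=; lia. Qed.

Lemma yoke_flow_step (u v : Yv) g : is_flow u v g -> (0 < flow_cost m g)%N ->
  exists (i : 'I_m.+1) (s : int) (u' : Yv),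
    [/\ (s == 1) || (s == -1), is_flow u u' (unit_flow i s)
      & (flow_cost m (\- unit_flow i s \+ g) < flow_cost m g)%N].
Proof.
move=> uv; rewrite lt0n sum_nat_eq0 negb_forall => /existsP[i0 /=].
rewrite absz_eq0 => g_i0.
pose s0 : int := if 0 < g i0 then 1 else -1.
have unit_s0 : (s0 == 1) || (s0 == -1) by rewrite /s0; case: ifP.
have s0g_pos : 0 < s0 * g i0 by rewrite /s0; case: ifP; lia.
have ab01 j : (0 < j <= m)%N -> (0 <= EY u j <= 1) && (0 <= EY v j <= 1).
  by move=> j_int; rewrite !yoke_entry_01.
have [i le_im [sgi_pos moved]] :=
  chip_move unit_s0 ab01 (fun j => is_flow_interior uv) (ltn_ord i0) s0g_pos.
pose e j := EY u j + inflow m (unit_flow i s0) j.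
have sum_e : (n %| \sum_(j < m.+2) e j)%Z.
  by rewrite big_split /= sum_inflow addr0 yk_entry_sum.
have dec_e j : (0 < j <= m)%N -> yoke_val (yoke_of_int (e j)) = e j.
  by move/moved/yoke_of_intK.
exists (Ordinal (le_im : (i < m.+1)%N)), s0, (vertex_of n_gt0 dec_e sum_e).
split => //; last exact: flow_cost_unit_lt.
by move=> j; apply: vertex_ofE.
Qed.

Lemma yoke_flow_ball (u v : Yv) g :
  is_flow u v g -> v \in ball (@Yoke_adj n m) (flow_cost m g) u.
Proof.
move: {2}(flow_cost m g) (erefl (flow_cost m g)) => c.
elim/ltn_ind: c u g => c IHc u g cost_g uv.
have [cost0 | cost_pos] := posnP (flow_cost m g).
  by rewrite cost0 (is_flow_cost0 yoke_val_inj cost0 uv) ball_refl.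
have [i [s [u' [unit_s uu' lt_cost]]]] := yoke_flow_step uv cost_pos.
rewrite cost_g in lt_cost.
have u'v := IHc _ lt_cost u' _ erefl (is_flow_trans (is_flow_sym uu') uv).
by apply: ball_mono (ball_add (unit_flow_ball1 unit_s uu') u'v); rewrite add1n cost_g.
Qed.

Lemma yoke_connected (u v : Yv) : exists k, v \in ball (@Yoke_adj n m) k u.
Proof.
by have [g uv] := is_flow_exists u v; exists (flow_cost m g); exact: yoke_flow_ball.
Qed.

Section YokeDiff.
Variable u : Yv.

Lemma dvdz_sum_yoke_entry_sub (v : Yv) : (n %| \sum_(j < m.+2) (EY v j - EY u j))%Z.
Proof. by rewrite sumrB rpredB ?yk_entry_sum. Qed.

Lemma dyoke_of_int_yoke_entry_sub (v : Yv) j : (0 < j <= m)%N ->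
  dyoke_val (dyoke_of_int (EY v j - EY u j)) = EY v j - EY u j.
Proof.
move=> j_int; apply: dyoke_of_intK.
by have := yoke_entry_01 u j_int; have := yoke_entry_01 v j_int; lia.
Qed.

Definition yoke_diff (v : Yv) : Zv :=
  vertex_of n_gt0 (@dyoke_of_int_yoke_entry_sub v) (dvdz_sum_yoke_entry_sub v).

Lemma yoke_diffE v j : (j <= m.+1)%N -> eqat j (EZ (yoke_diff v) j) (EY v j - EY u j).
Proof. exact: vertex_ofE. Qed.

Lemma is_flow_yoke_diff v w g : is_flow (yoke_diff v) (yoke_diff w) g <-> is_flow v w g.
Proof.
suff eqv j : (j <= m.+1)%N ->
    eqat j (EZ (yoke_diff w) j) (EZ (yoke_diff v) j + inflow m g j)
    = eqat j (EY w j) (EY v j + inflow m g j).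
  by split=> flow j le_jm; [rewrite -eqv // | rewrite eqv //]; exact: flow.
move=> le_jm.
have := eqat_add (yoke_diffE v le_jm) (eqat_refl n m j (inflow m g j)).
by move/(eqat_congr (yoke_diffE w le_jm)) => ->; rewrite addrAC eqat_addr2.
Qed.

Lemma yoke_diff_ball v k :
  (yoke_diff v \in ball (@dYoke_adj n m) k (yoke_diff u))
  = (v \in ball (@Yoke_adj n m) k u).
Proof.
apply/idP/idP => [/flow_of_ball[g /is_flow_yoke_diff uv le_gk] | ].
  exact: ball_mono le_gk (yoke_flow_ball uv).
apply: ball_hom => p q /yk_adj_unit_flow[i [s unit_s /is_flow_yoke_diff pq]].
exact: unit_flow_ball1 unit_s pq.
Qed.

Lemma yoke_diff_self (z : Zv) :
  (forall j, (j <= m.+1)%N -> EZ z j = 0) -> yoke_diff u = z.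
Proof.
move=> z0; apply: (yk_vtx_eq dyoke_val_inj) => j le_jm.
by have := yoke_diffE u le_jm; rewrite subrr z0.
Qed.

End YokeDiff.

Lemma yoke_diff_surj (w : Zv) : exists u v, yoke_diff u v = w.
Proof.
(* [u] holds a unit exactly where [w] is [-1], so that [v := u + w] is 0/1 in
   the interior; the last bucket of [u] balances its sum. *)
pose c j : int := if EZ w j == -1 then 1 else 0.
pose eu j := if j == m.+1 then - \sum_(i < m.+1) c i else c j.
pose ev j := eu j + EZ w j.
have eu_int j : (0 < j <= m)%N -> eu j = c j.
  by move=> j_int; rewrite /eu ifN //; apply/eqP; lia.
have sum_eu0 : \sum_(j < m.+2) eu j = 0.
  rewrite big_ord_recr /=.
  have -> : eu m.+1 = - \sum_(i < m.+1) c i by rewrite /eu eqxx.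
  suff -> : \sum_(i < m.+1) eu i = \sum_(i < m.+1) c i by rewrite subrr.
  by apply: eq_bigr => i _; rewrite /eu ifN // neq_ltn ltn_ord.
have dec_u j : (0 < j <= m)%N -> yoke_val (yoke_of_int (eu j)) = eu j.
  by move=> j_int; rewrite eu_int //; apply: yoke_of_intK; rewrite /c; case: ifP.
have dec_v j : (0 < j <= m)%N -> yoke_val (yoke_of_int (ev j)) = ev j.
  move=> j_int; rewrite /ev eu_int //; apply: yoke_of_intK.
  by have := dyoke_entry_range w j_int; rewrite /c; case: eqP; lia.
have sum_u : (n %| \sum_(j < m.+2) eu j)%Z by rewrite sum_eu0 dvdz0.
have sum_v : (n %| \sum_(j < m.+2) ev j)%Z.
  by rewrite big_split /= sum_eu0 add0r yk_entry_sum.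
exists (vertex_of n_gt0 dec_u sum_u), (vertex_of n_gt0 dec_v sum_v).
apply: (yk_vtx_eq dyoke_val_inj) => j le_jm; apply: eqat_trans (yoke_diffE _ _ le_jm) _.
have := eqat_add (vertex_ofE n_gt0 dec_v sum_v le_jm)
  (eqat_opp (vertex_ofE n_gt0 dec_u sum_u le_jm)).
by rewrite /ev [eu j + _]addrC addrK.
Qed.

End Yoke.

Local Close Scope ring_scope.
Unset Implicit Arguments.

Theorem theorem5p22 (n m : nat) : (0 < n)%N ->
  forall z : dYoke_vtx n m, (forall j : 'I_m.+2, yk_entry z j = 0%R) ->
  diam (@Yoke_adj n m) = ecc (@dYoke_adj n m) z.
Proof.
move=> n_gt0 z z0.
have z0' j : (j <= m.+1)%N -> yk_entry z j = 0%R.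
  by move=> le_jm; have := z0 (inord j); rewrite inordK.
apply: (diam_eq_ecc (F := yoke_diff n_gt0)).
- exact: yoke_connected.
- by move=> u v k; rewrite -(yoke_diff_self n_gt0 u z0') yoke_diff_ball.
- exact: yoke_diff_surj.
Qed.
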